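(* For each prime number $p>2$, there exists a self-similar $p$-adic fractal string $\mathcal{CS}_p\subseteq\mathbb{Z}_p$ of Minkowski--Bouligand dimension $D=\frac{\log(\frac{1+p}{2})}{\log p}$ and with oscillatory period $\mathbf{p}=\frac{2\pi}{\log p}$; that is, its geometric zeta function extends meromorphically to $\mathbb{C}$, its set of poles (complex dimensions) is exactly $\{D+\frac{2\pi i n}{\log p}: n\in\mathbb{Z}\}$, and $D$ is the abscissa of convergence of the series defining the geometric zeta function.
   Context: Let $p$ be a prime and $\mathbb{Z}_p$ the ring of $p$-adic integers with $|p|_p=p^{-1}$. A $p$-adic fractal string $\mathcal{L}$ in $\mathbb{Z}_p$ is a countable disjoint union of balls $a+p^n\mathbb{Z}_p$ ($a\in\mathbb{Z}_p$, $n\ge1$) contained in $\mathbb{Z}_p$; such a ball has length $p^{-n}$, and $\mathcal{L}$ is encoded by its sequence of lengths $l_j$ counted with multiplicity. Its geometric zeta function is $\zeta_{\mathcal{L}}(s)=\sum_j l_j^s$ for $\Re(s)$ large, meromorphically continued to $\mathbb{C}$ when possible; the complex dimensions are the poles of this continuation; the Minkowski--Bouligand dimension $D$ is the abscissa of convergence of $\sum_j l_j^s$; the oscillatory period is $\mathbf{p}>0$ if the set of complex dimensions is exactly $\{D+in\mathbf{p}:n\in\mathbb{Z}\}$. $\mathcal{L}$ is self-similar if it is the complement in $\mathbb{Z}_p$ of the unique nonempty compact set $K\subseteq\mathbb{Z}_p$ satisfying $K=\bigcup_i\phi_i(K)$ for a finite family of at least two similarity contractions $\phi_i(x)=c_i+p^{m}x$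 of $\mathbb{Z}_p$ into itself ($c_i\in\mathbb{Z}$, $m\ge1$). *)

From Stdlib Require Import Reals ZArith List Znumtheory Classical ClassicalDescription.
From Coquelicot Require Import Coquelicot.
Open Scope R_scope.

(* An element of Z_p is represented by its coherent sequence of residues:
   x n is the residue of x modulo p^n, in [0, p^n), with x (n+1) = x n mod p^n. *)
Definition padic (p : nat) (x : nat -> Z) : Prop :=
  forall n : nat,
    (0 <= x n < Z.of_nat p ^ Z.of_nat n)%Z /\
    (x (S n) mod (Z.of_nat p ^ Z.of_nat n) = x n)%Z.

(* Subsets of Z_p: predicates on residue sequences (only valid ones matter). *)
Definition pset := (nat -> Z) -> Prop.

(* The ball r + p^n Z_p  (r a residue mod p^n); it has length p^{-n}. *)
Definition ball (p : nat) (r : Z) (n : nat) : pset :=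
  fun x => padic p x /\ x n = r.

Definition psubset (p : nat) (A B : pset) : Prop :=
  forall x, padic p x -> A x -> B x.

Definition pset_eq (p : nat) (A B : pset) : Prop :=
  forall x, padic p x -> (A x <-> B x).

Definition popen (p : nat) (U : pset) : Prop :=
  forall x, padic p x -> U x -> exists n : nat, psubset p (ball p (x n) n) U.

Definition pcompact (p : nat) (K : pset) : Prop :=
  forall (I : Type) (U : I -> pset),
    (forall i, popen p (U i)) ->
    (forall x, padic p x -> K x -> exists i, U i x) ->
    exists l : list I, forall x, padic p x -> K x -> exists i, In i l /\ U i x.

Definition phi (p : nat) (m : nat) (c : Z) (x : nat -> Z) : nat -> Z :=
  fun n => ((c + Z.of_nat p ^ Z.of_nat m * x n) mod (Z.of_nat p ^ Z.of_nat n))%Z.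

Definition self_similar_eq (p m : nat) (cs : list Z) (K : pset) : Prop :=
  pset_eq p K (fun y => exists c, In c cs /\
                 exists x, padic p x /\ K x /\ forall n, y n = phi p m c x n).

Definition attractor (p m : nat) (cs : list Z) (K : pset) : Prop :=
  (exists x, padic p x /\ K x) /\ pcompact p K /\ self_similar_eq p m cs K.

(** The fractal string: complement of K in Z_p, decomposed into its maximal balls. *)
Definition in_compl (K : pset) : pset := fun x => ~ K x.

Definition maximal_ball (p : nat) (K : pset) (r : Z) (n : nat) : Prop :=
  (1 <= n)%nat /\ (0 <= r < Z.of_nat p ^ Z.of_nat n)%Z /\
  psubset p (ball p r n) (in_compl K) /\
  ~ psubset p (ball p (r mod (Z.of_nat p ^ Z.of_nat (n - 1)))%Z (n - 1))
             (in_compl K).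

Definition ind (P : Prop) : R :=
  if excluded_middle_informative P then 1 else 0.

(* multiplicity of the length p^{-n} in the fractal string *)
Definition mult (p : nat) (K : pset) (n : nat) : R :=
  fold_right Rplus 0
    (map (fun r => ind (maximal_ball p K (Z.of_nat r) n)) (seq 0 (p ^ n))).

Definition cpow (l : R) (s : C) : C :=
  (exp (Re s * ln l) * cos (Im s * ln l), exp (Re s * ln l) * sin (Im s * ln l)).

(* The n-th grouped term of the geometric zeta function:
   (number of lengths equal to p^{-n}) * (p^{-n})^s. *)
Definition zeta_term (p : nat) (K : pset) (s : C) (n : nat) : C :=
  Cmult (RtoC (mult p K n)) (cpow (/ INR p ^ n) s).

(* Minkowski--Bouligand dimension: abscissa of convergence of sum_j l_j^sigma. *)
Definition conv_at (p : nat) (K : pset) (sigma : R) : Prop :=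
  ex_series (fun n => mult p K n * Rpower (/ INR p ^ n) sigma).

Definition is_abscissa (p : nat) (K : pset) (D : R) : Prop :=
  (forall sigma, conv_at p K sigma -> D <= sigma) /\
  (forall b, (forall sigma, conv_at p K sigma -> b <= sigma) -> b <= D).

Definition meromorphic_cont_with_poles (p : nat) (K : pset) (f : C -> C)
  (P : C -> Prop) : Prop :=
  (exists sigma0 : R, forall s : C, sigma0 < Re s ->
     is_series (zeta_term p K s) (f s)) /\
  (forall z : C, ~ P z -> exists l : C, is_derive f z l) /\
  (forall z : C, P z ->
     filterlim (fun w => Cmod (f w)) (locally' z) (Rbar_locally p_infty)).

(* Write p = 2k + 1 and let K be the set of p-adic integers all of whose base-p digits
   are even.  K is the attractor of the k + 1 similarities x |-> c + p x, c = 0, 2, ..., 2k: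
   it is closed, hence compact (Koenig's lemma), and any other attractor is closed, contained
   in K and dense in K.  A maximal ball of Z_p \ K of length p^-(m+1) is a residue mod p^(m+1)
   whose first m digits are even and whose m-th digit is odd, so there are k (k+1)^m of them
   and the geometric zeta function is
     sum_m k (k+1)^m p^(-(m+1)s) = k p^-s / (1 - (k+1) p^-s).
   The series converges exactly for Re s > D = log (k+1) / log p = log ((1+p)/2) / log p, and
   the right-hand side is holomorphic except where p^s = k+1, i.e. at D + 2 pi i n / log p,
   where it blows up. *)

From Pilot Require Import Defs.
From Stdlib Require Import Reals ZArith List Znumtheory Lia Lra.
From Stdlib Require Import Classical ClassicalDescription IndefiniteDescription.
From Stdlib Require Import FunctionalExtensionality.
From Coquelicot Require Import Coquelicot.
Open Scope R_scope.

(** * p-adic integers and their digits *)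

Local Notation zpow p n := (Z.of_nat p ^ Z.of_nat n)%Z.

Definition digit (p : nat) (r : Z) (j : nat) : Z := ((r / zpow p j) mod Z.of_nat p)%Z.

Definition even_digits (p : nat) (r : Z) (n : nat) : Prop :=
  forall j, (j < n)%nat -> Z.even (digit p r j) = true.

Definition even_digit_set (p : nat) : pset :=
  fun x => padic p x /\ forall n, even_digits p (x n) n.

Definition pshift (p : nat) (y : nat -> Z) : nat -> Z := fun n => (y (S n) / Z.of_nat p)%Z.

Definition zpadic (p : nat) (r : Z) : nat -> Z := fun n => (r mod zpow p n)%Z.

Definition pclosed (p : nat) (K : pset) : Prop :=
  forall x, padic p x -> (forall n, exists y, padic p y /\ K y /\ y n = x n) -> K x.

Lemma zpow_S p n : zpow p (S n) = (Z.of_nat p * zpow p n)%Z.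
Proof. rewrite Nat2Z.inj_succ, Z.pow_succ_r; lia. Qed.

Lemma zpow_add p a b : zpow p (a + b) = (zpow p a * zpow p b)%Z.
Proof. rewrite Nat2Z.inj_add, Z.pow_add_r; lia. Qed.

Lemma padic_0 p x : padic p x -> x 0%nat = 0%Z.
Proof. intros H. destruct (H 0%nat) as [H1 _]. simpl in H1. lia. Qed.

Lemma zpadic_at p r n : (0 <= r < zpow p n)%Z -> zpadic p r n = r.
Proof. apply Z.mod_small. Qed.

Lemma phi1_eq p c x n : phi p 1 c x n = ((c + Z.of_nat p * x n) mod zpow p n)%Z.
Proof. unfold phi. now rewrite Z.pow_1_r. Qed.

Lemma even_digits_S p r n :
  even_digits p r (S n) <-> even_digits p r n /\ Z.even (digit p r n) = true.
Proof.
  split.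
  - intros H; split; [intros j Hj|]; apply H; lia.
  - intros [H1 H2] j Hj. destruct (Nat.eq_dec j n); [subst; auto | apply H1; lia].
Qed.

Section Padic.
Variable p : nat.
Hypothesis p_pos : (0 < p)%nat.

Lemma zpow_pos n : (0 < zpow p n)%Z.
Proof. apply Z.pow_pos_nonneg; lia. Qed.

Lemma zpow_divide a b : (a <= b)%nat -> (zpow p a | zpow p b)%Z.
Proof.
  intros H. replace b with (a + (b - a))%nat by lia. rewrite zpow_add.
  exists (zpow p (b - a)); ring.
Qed.

Lemma zpow_le a b : (a <= b)%nat -> (zpow p a <= zpow p b)%Z.
Proof.
  intros H. apply Z.divide_pos_le; [apply zpow_pos | now apply zpow_divide].
Qed.

Lemma padic_mod_le x n m : padic p x -> (n <= m)%nat -> (x m mod zpow p n)%Z = x n.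
Proof.
  intros Hx H. induction H.
  - apply Z.mod_small, Hx.
  - rewrite <- IHle, <- (proj2 (Hx m)), Z.mod_mod_divide; auto. apply zpow_divide; lia.
Qed.

Lemma padic_top_digit x n :
  padic p x -> (0 <= x (S n) / zpow p n < Z.of_nat p)%Z /\
  x (S n) = (x n + zpow p n * (x (S n) / zpow p n))%Z.
Proof.
  intros Hx. pose proof (zpow_pos n). split.
  - split; [apply Z.div_pos; [apply Hx|lia]|].
    apply Z.div_lt_upper_bound; [lia|]. rewrite Z.mul_comm, <- zpow_S. apply Hx.
  - rewrite (Z.div_mod (x (S n)) (zpow p n)) at 1 by lia.
    rewrite padic_mod_le by (auto; lia). lia.
Qed.

Lemma zpadic_padic r : padic p (zpadic p r).
Proof.
  intros n. split.
  - apply Z.mod_pos_bound, zpow_pos.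
  - apply Z.mod_mod_divide, zpow_divide; lia.
Qed.

Lemma padic_pshift y : padic p y -> padic p (pshift p y).
Proof.
  intros Hy n. unfold pshift. pose proof (zpow_pos n).
  assert (Hrange : forall m, (0 <= y (S m) / Z.of_nat p < zpow p m)%Z).
  { intros m. split; [apply Z.div_pos; [apply Hy|lia]|].
    apply Z.div_lt_upper_bound; [lia|]. rewrite <- zpow_S. apply Hy. }
  split; [apply Hrange|].
  rewrite (Z.div_mod (y (S (S n))) (zpow p (S n))) by (pose proof (zpow_pos (S n)); lia).
  rewrite (padic_mod_le y (S n)), zpow_S by (auto; lia).
  replace (Z.of_nat p * zpow p n * (y (S (S n)) / (Z.of_nat p * zpow p n)) + y (S n))%Z
    with (y (S n) + zpow p n * (y (S (S n)) / (Z.of_nat p * zpow p n)) * Z.of_nat p)%Z by ring.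
  rewrite Z.div_add, Z.mul_comm, Z.mod_add by lia. apply Z.mod_small, Hrange.
Qed.

Lemma phi1_pshift y n : padic p y -> y n = phi p 1 (y 1%nat) (pshift p y) n.
Proof.
  intros Hy. rewrite phi1_eq. unfold pshift.
  assert (Hp1 : zpow p 1 = Z.of_nat p) by apply Z.pow_1_r.
  rewrite <- (padic_mod_le y 1 (S n)), Hp1, Z.add_comm, <- Z.div_mod by (auto; lia).
  symmetry. apply padic_mod_le; auto.
Qed.

Lemma phi1_padic c x : padic p x -> padic p (phi p 1 c x).
Proof.
  intros Hx n. rewrite !phi1_eq. split.
  - apply Z.mod_pos_bound, zpow_pos.
  - rewrite Z.mod_mod_divide by (apply zpow_divide; lia).
    pose proof (zpow_pos n). rewrite <- (proj2 (Hx n)). symmetry.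
    rewrite <- Z.add_mod_idemp_r, Z.mul_mod_idemp_r, Z.add_mod_idemp_r by lia. reflexivity.
Qed.

Lemma phi1_S_eq c x z n : padic p x -> padic p z -> x n = z n ->
  phi p 1 c x (S n) = phi p 1 c z (S n).
Proof.
  intros Hx Hz H. rewrite !phi1_eq, !zpow_S. pose proof (zpow_pos n).
  rewrite Z.add_mod, (Z.add_mod c), !Z.mul_mod_distr_l by nia.
  rewrite <- (padic_mod_le x n (S n)), <- (padic_mod_le z n (S n)) in H by auto.
  now rewrite H.
Qed.

Lemma digit_mod r n j : (j < n)%nat -> digit p (r mod zpow p n) j = digit p r j.
Proof.
  intros Hj. unfold digit. pose proof (zpow_pos j).
  assert (E : zpow p n = (zpow p j * (Z.of_nat p * zpow p (n - S j)))%Z).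
  { rewrite <- zpow_S, <- zpow_add. f_equal. lia. }
  set (q := zpow p (n - S j)) in E.
  rewrite (Z.div_mod r (zpow p n)) at 2 by (pose proof (zpow_pos n); lia).
  rewrite E.
  replace (zpow p j * (Z.of_nat p * q) * (r / (zpow p j * (Z.of_nat p * q)))
           + r mod (zpow p j * (Z.of_nat p * q)))%Z
    with (r mod (zpow p j * (Z.of_nat p * q))
          + (q * (r / (zpow p j * (Z.of_nat p * q))) * Z.of_nat p) * zpow p j)%Z by ring.
  rewrite Z.div_add, Z.mod_add by lia. reflexivity.
Qed.

Lemma digit_div_p r j : digit p (r / Z.of_nat p) j = digit p r (S j).
Proof.
  unfold digit. rewrite Z.div_div, <- zpow_S by (try lia; apply zpow_pos). reflexivity.
Qed.

Lemma digit_affine_0 c r : (0 <= c < Z.of_nat p)%Z -> digit p (c + Z.of_nat p * r) 0 = c.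
Proof.
  intros Hc. unfold digit. rewrite Z.pow_0_r, Z.div_1_r, Z.mul_comm, Z.mod_add by lia.
  apply Z.mod_small; lia.
Qed.

Lemma digit_affine_S c r j : (0 <= c < Z.of_nat p)%Z ->
  digit p (c + Z.of_nat p * r) (S j) = digit p r j.
Proof.
  intros Hc. rewrite <- digit_div_p, Z.mul_comm, Z.div_add, Z.div_small by lia.
  reflexivity.
Qed.

Lemma even_digits_mod r n : even_digits p (r mod zpow p n) n <-> even_digits p r n.
Proof. split; intros H j Hj; specialize (H j Hj); rewrite ?digit_mod in * by auto; auto. Qed.

Lemma even_digits_affine c r n : (0 <= c < Z.of_nat p)%Z -> Z.even c = true ->
  even_digits p r n -> even_digits p ((c + Z.of_nat p * r) mod zpow p (S n)) (S n).
Proof.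
  intros Hc He Hr. apply even_digits_mod. intros [|j] Hj.
  - now rewrite digit_affine_0.
  - rewrite digit_affine_S by auto. apply Hr. lia.
Qed.

Fixpoint digit_path (next : Z * nat -> Z) (n : nat) : Z :=
  match n with
  | O => 0%Z
  | S n => (digit_path next n + zpow p n * next (digit_path next n, n))%Z
  end.

(* König's lemma for the p-ary tree of residues. *)
Lemma padic_branch (P : Z -> nat -> Prop) :
  P 0%Z 0%nat ->
  (forall r n, P r n ->
     exists d, (0 <= d < Z.of_nat p)%Z /\ P (r + zpow p n * d)%Z (S n)) ->
  exists s, padic p s /\ forall n, P (s n) n.
Proof.
  intros P0 P_split.
  assert (Hstep : forall rn : Z * nat, exists d, P (fst rn) (snd rn) ->
            (0 <= d < Z.of_nat p)%Z /\ P (fst rn + zpow p (snd rn) * d)%Z (S (snd rn))).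
  { intros [r n]. destruct (classic (P r n)) as [H|H].
    - destruct (P_split r n H) as [d Hd]. now exists d.
    - exists 0%Z. tauto. }
  destruct (functional_choice _ Hstep) as [next Hnext].
  assert (Hpath : forall n, P (digit_path next n) n /\
                            (0 <= digit_path next n < zpow p n)%Z).
  { induction n as [|n [Hb Hr]]; [split; [exact P0 | simpl; lia]|].
    destruct (Hnext (digit_path next n, n) Hb) as [Hd Hb'].
    simpl fst in *; simpl snd in *. split; [exact Hb'|]. cbn [digit_path].
    rewrite zpow_S. nia. }
  exists (digit_path next). split; [|apply Hpath].
  intros n. split; [apply Hpath|]. cbn [digit_path].
  rewrite Z.mul_comm, Z.mod_add by (pose proof (zpow_pos n); lia). apply Z.mod_small, Hpath.
Qed.
End Padic.

(** * Closed and compact subsets of Z_p *)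

Lemma list_collect {A B : Type} (P : A -> list B -> Prop) (L : list A) :
  (forall a l l', incl l l' -> P a l -> P a l') ->
  (forall a, In a L -> exists l, P a l) -> exists l, forall a, In a L -> P a l.
Proof.
  intros Hmono. induction L as [|a L IH]; intros HL.
  - exists nil. intros a [].
  - destruct (HL a (or_introl eq_refl)) as [la Ha].
    destruct IH as [l Hl]; [intros b Hb; apply HL; now right|].
    exists (la ++ l). intros b [Hab|Hb].
    + subst b. apply (Hmono a la); [apply incl_appl, incl_refl | exact Ha].
    + apply (Hmono b l); [apply incl_appr, incl_refl | now apply Hl].
Qed.

Section Topology.
Variable p : nat.
Hypothesis p_pos : (0 < p)%nat.

Lemma pcompact_of_pclosed K : pclosed p K -> pcompact p K.
Proof.
  intros HK I U HU Hcov. apply NNPP; intros Hno.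
  set (Cov := fun r n (l : list I) =>
         forall x, padic p x -> K x -> x n = r -> exists i, In i l /\ U i x).
  set (Bad := fun r n => ~ exists l, Cov r n l).
  assert (Bad0 : Bad 0%Z 0%nat).
  { intros [l Hl]. apply Hno. exists l. intros x Hx HKx. apply Hl; auto. now apply (padic_0 p). }
  assert (Bad_split : forall r n, Bad r n ->
            exists d, (0 <= d < Z.of_nat p)%Z /\ Bad (r + zpow p n * d)%Z (S n)).
  { intros r n Hb. apply NNPP; intros Hn. apply Hb.
    destruct (list_collect (fun d => Cov (r + zpow p n * Z.of_nat d)%Z (S n)) (seq 0 p))
      as [l Hl].
    - intros d l l' Hll' Hl x Hx HKx Hxn. destruct (Hl x Hx HKx Hxn) as [i [Hi HUi]].
      exists i; auto.
    - intros d Hd. apply in_seq in Hd. apply NNPP; intros Hnd. apply Hn.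
      exists (Z.of_nat d). split; [lia | exact Hnd].
    - exists l. intros x Hx HKx Hxn.
      destruct (padic_top_digit p p_pos x n Hx) as [Hd Hxd].
      apply (Hl (Z.to_nat (x (S n) / zpow p n))); auto.
      + apply in_seq. lia.
      + rewrite Hxd at 1. rewrite Z2Nat.id; lia. }
  destruct (padic_branch p p_pos Bad Bad0 Bad_split) as [s [Hs Hbad]].
  assert (HKs : K s).
  { apply HK; auto. intros n. apply NNPP; intros Hn. apply (Hbad n). exists nil.
    intros x Hx HKx Hxn. exfalso. eauto. }
  destruct (Hcov s Hs HKs) as [i HUi]. destruct (HU i s Hs HUi) as [n Hn].
  apply (Hbad n). exists (i :: nil). intros x Hx HKx Hxn.
  exists i. split; [now left|]. apply Hn; auto. now split.
Qed.

Lemma pclosed_of_pcompact K : pcompact p K -> pclosed p K.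
Proof.
  intros HK x Hx Happrox. apply NNPP; intros HnK.
  destruct (HK nat (fun j z => z j <> x j)) as [l Hl].
  - intros j z Hz Hzj. exists j. intros y _ [_ Hyj]. congruence.
  - intros z Hz HKz. apply NNPP; intros Hn. apply HnK.
    replace x with z; auto. apply functional_extensionality. intros j.
    apply NNPP; eauto.
  - destruct (Happrox (list_max l)) as [y [Hy [HKy HyN]]].
    destruct (Hl y Hy HKy) as [j [Hj Hyj]]. apply Hyj.
    assert (Hle : (j <= list_max l)%nat).
    { assert (Hall := proj1 (list_max_le l (list_max l)) (le_n _)).
      rewrite Forall_forall in Hall. auto. }
    rewrite <- (padic_mod_le p p_pos y j (list_max l)), <- (padic_mod_le p p_pos x j (list_max l));
      auto. congruence.
Qed.
End Topology.

(** * The p-adic integers with even digits *)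

Section EvenDigitSet.
Variable p : nat.
Hypothesis p_pos : (0 < p)%nat.

Lemma even_digit_set_pclosed : pclosed p (even_digit_set p).
Proof.
  intros x Hx Happrox. split; auto. intros n.
  destruct (Happrox n) as [y [_ [[_ Hy] Hyx]]]. rewrite <- Hyx. apply Hy.
Qed.

Lemma even_digit_set_0 : even_digit_set p (zpadic p 0).
Proof.
  split; [now apply zpadic_padic|]. intros n j _.
  unfold zpadic, digit. now rewrite !Zmod_0_l, ?Zdiv_0_l.
Qed.

Lemma even_digits_phi1 c x n : (0 <= c < Z.of_nat p)%Z -> Z.even c = true -> padic p x ->
  even_digits p (x n) n -> even_digits p (phi p 1 c x (S n)) (S n).
Proof.
  intros Hc He Hx Hxn. rewrite phi1_eq. apply even_digits_affine; auto.
  rewrite <- even_digits_mod, padic_mod_le by auto. exact Hxn.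
Qed.

Lemma even_digit_set_phi1 c x : (0 <= c < Z.of_nat p)%Z -> Z.even c = true ->
  even_digit_set p x -> even_digit_set p (phi p 1 c x).
Proof.
  intros Hc He [Hx Hxe]. split; [now apply phi1_padic|].
  intros [|n]; [intros j Hj; lia|]. apply even_digits_phi1; auto.
Qed.

Lemma even_digit_set_pshift y : even_digit_set p y -> even_digit_set p (pshift p y).
Proof.
  intros [Hy Hye]. split; [now apply padic_pshift|].
  intros n j Hj. unfold pshift. rewrite digit_div_p by auto. apply Hye. lia.
Qed.

Lemma even_digit_set_first_digit y : even_digit_set p y ->
  (0 <= y 1%nat < Z.of_nat p)%Z /\ Z.even (y 1%nat) = true.
Proof.
  intros [Hy Hye]. assert (Hy1 := proj1 (Hy 1%nat)). rewrite Z.pow_1_r in Hy1.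
  split; [exact Hy1|]. specialize (Hye 1%nat 0%nat ltac:(lia)).
  unfold digit in Hye. rewrite Z.pow_0_r, Z.div_1_r, Z.mod_small in Hye by lia. exact Hye.
Qed.
End EvenDigitSet.

Definition even_offsets (k : nat) : list Z := map (fun i => (2 * Z.of_nat i)%Z) (seq 0 (S k)).

Lemma In_even_offsets k c :
  In c (even_offsets k) <-> (0 <= c < Z.of_nat (2 * k + 1))%Z /\ Z.even c = true.
Proof.
  unfold even_offsets. rewrite in_map_iff. split.
  - intros [i [<- Hi]]. apply in_seq in Hi. split; [lia|].
    rewrite Z.even_spec. exists (Z.of_nat i). lia.
  - intros [Hc He]. apply Z.even_spec in He. destruct He as [m Hm].
    exists (Z.to_nat m). split; [lia|]. apply in_seq. lia.
Qed.

Lemma even_offsets_length k : length (even_offsets k) = S k.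
Proof. unfold even_offsets. now rewrite length_map, length_seq. Qed.

Lemma even_offsets_NoDup k : NoDup (even_offsets k).
Proof.
  unfold even_offsets. apply NoDup_map_NoDup_ForallPairs; [| apply seq_NoDup].
  intros a b _ _ H. lia.
Qed.

Section Attractor.
Variable k : nat.
Local Notation p := (2 * k + 1)%nat.
Let p_pos : (0 < p)%nat. Proof. lia. Qed.

Lemma even_digit_set_self_similar : self_similar_eq p 1 (even_offsets k) (even_digit_set p).
Proof.
  intros y Hy. split.
  - intros HKy. exists (y 1%nat). split.
    + apply In_even_offsets, even_digit_set_first_digit; auto.
    + exists (pshift p y). split; [now apply padic_pshift|].
      split; [now apply even_digit_set_pshift|]. intros n. now apply phi1_pshift.
  - intros [c [Hc [x [Hx [HKx Hyx]]]]]. apply In_even_offsets in Hc.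
    replace y with (phi p 1 c x) by (symmetry; now apply functional_extensionality).
    now apply even_digit_set_phi1.
Qed.

Lemma even_digit_set_attractor : attractor p 1 (even_offsets k) (even_digit_set p).
Proof.
  split; [|split].
  - exists (zpadic p 0). split; [now apply zpadic_padic | now apply even_digit_set_0].
  - apply pcompact_of_pclosed, even_digit_set_pclosed; auto.
  - apply even_digit_set_self_similar.
Qed.

Section OtherAttractor.
Variable K : pset.
Hypothesis K_attr : attractor p 1 (even_offsets k) K.

Lemma attractor_even_digits n y : padic p y -> K y -> even_digits p (y n) n.
Proof.
  destruct K_attr as [_ [_ Hss]]. revert y. induction n as [|n IH]; intros y Hy HKy.
  - intros j Hj; lia.
  - destruct (proj1 (Hss y Hy) HKy) as [c [Hc [x [Hx [HKx Hyx]]]]].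
    apply In_even_offsets in Hc. rewrite Hyx. apply even_digits_phi1; auto; apply Hc.
Qed.

Lemma attractor_approx N y : even_digit_set p y ->
  exists z, padic p z /\ K z /\ z N = y N.
Proof.
  destruct K_attr as [[x0 [Hx0 HKx0]] [_ Hss]]. revert y.
  induction N as [|N IH]; intros y HKy.
  - exists x0. split; auto. split; auto. rewrite (padic_0 p x0), (padic_0 p y); auto. apply HKy.
  - destruct (IH (pshift p y) (even_digit_set_pshift p p_pos y HKy)) as [z [Hz [HKz HzN]]].
    assert (Hy := proj1 HKy).
    exists (phi p 1 (y 1%nat) z). split; [now apply phi1_padic|]. split.
    + apply (proj2 (Hss _ (phi1_padic p p_pos _ z Hz))). exists (y 1%nat). split.
      * apply In_even_offsets, even_digit_set_first_digit; auto.
      * exists z. auto.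
    + rewrite (phi1_pshift p p_pos y (S N) Hy). apply phi1_S_eq; auto. now apply padic_pshift.
Qed.

Lemma attractor_unique : pset_eq p K (even_digit_set p).
Proof.
  intros y Hy. split.
  - intros HKy. split; auto. intros n. now apply attractor_even_digits.
  - intros HKy. apply (pclosed_of_pcompact p p_pos K (proj1 (proj2 K_attr)) y Hy).
    intros n. now apply attractor_approx.
Qed.
End OtherAttractor.
End Attractor.

(** * Counting the maximal balls of the complement *)

Section MaximalBalls.
Variable p : nat.
Hypothesis p_pos : (0 < p)%nat.

Lemma ball_in_compl_iff r n : (0 <= r < zpow p n)%Z ->
  psubset p (Defs.ball p r n) (in_compl (even_digit_set p)) <-> ~ even_digits p r n.
Proof.
  intros Hr. split.
  - intros Hsub Hev. apply (Hsub (zpadic p r)); [now apply zpadic_padic| |].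
    + split; [now apply zpadic_padic | now apply zpadic_at].
    + split; [now apply zpadic_padic|]. intros m j Hj. unfold zpadic.
      rewrite digit_mod by auto. destruct (Nat.lt_ge_cases j n); [now apply Hev|].
      unfold digit. rewrite Z.div_small; [reflexivity|].
      pose proof (zpow_le p p_pos n j). lia.
  - intros Hnev x Hx [_ Hxn] [_ HKx]. apply Hnev. rewrite <- Hxn. apply HKx.
Qed.

Lemma maximal_ball_iff r m :
  maximal_ball p (even_digit_set p) r (S m) <->
  (0 <= r < zpow p (S m))%Z /\ even_digits p (r mod zpow p m) m /\
  Z.even (digit p r m) = false.
Proof.
  unfold maximal_ball. replace (S m - 1)%nat with m by lia.
  assert (Hrm : (0 <= r mod zpow p m < zpow p m)%Z)
    by (apply Z.mod_pos_bound, zpow_pos; auto).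
  split.
  - intros [_ [Hr [Hsub Hnsub]]]. rewrite ball_in_compl_iff in Hsub, Hnsub by auto.
    apply NNPP in Hnsub. split; [exact Hr|]. split; [exact Hnsub|].
    rewrite even_digits_S, <- (even_digits_mod p p_pos r m) in Hsub.
    destruct (Z.even (digit p r m)); tauto.
  - intros [Hrange [Hev Hodd]]. split; [lia|]. split; [exact Hrange|].
    rewrite !ball_in_compl_iff, even_digits_S, Hodd by auto. intuition discriminate.
Qed.
End MaximalBalls.

Definition sum_lt (f : nat -> R) (N : nat) : R := fold_right Rplus 0 (map f (seq 0 N)).

Lemma sum_lt_S f N : sum_lt f (S N) = sum_lt f N + f N.
Proof.
  unfold sum_lt. rewrite seq_S, map_app, fold_right_app. simpl.
  induction (map f (seq 0 N)) as [|a l IH]; simpl; [ring | rewrite IH; ring].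
Qed.

Lemma sum_lt_add f A B : sum_lt f (A + B) = sum_lt f A + sum_lt (fun r => f (A + r)%nat) B.
Proof.
  induction B as [|B IH]; [rewrite Nat.add_0_r; unfold sum_lt; simpl; ring|].
  rewrite Nat.add_succ_r, !sum_lt_S, IH. ring.
Qed.

Lemma sum_lt_mul f B D :
  sum_lt f (B * D) = sum_lt (fun d => sum_lt (fun r => f (B * d + r)%nat) B) D.
Proof.
  induction D as [|D IH]; [now rewrite Nat.mul_0_r|].
  now rewrite Nat.mul_succ_r, sum_lt_add, sum_lt_S, IH.
Qed.

Lemma sum_lt_ext f g N : (forall r, (r < N)%nat -> f r = g r) -> sum_lt f N = sum_lt g N.
Proof.
  intros H. unfold sum_lt. f_equal. apply map_ext_in. intros a Ha. apply in_seq in Ha.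
  apply H. lia.
Qed.

Lemma sum_lt_mult_r f c N : sum_lt (fun r => f r * c) N = sum_lt f N * c.
Proof. induction N as [|N IH]; [unfold sum_lt; simpl; ring | rewrite !sum_lt_S, IH; ring]. Qed.

Lemma ind_iff (P Q : Prop) : (P <-> Q) -> Defs.ind P = Defs.ind Q.
Proof.
  intros H. unfold Defs.ind.
  destruct (excluded_middle_informative P), (excluded_middle_informative Q); tauto.
Qed.

Lemma ind_and (P Q : Prop) : Defs.ind (P /\ Q) = Defs.ind P * Defs.ind Q.
Proof.
  unfold Defs.ind. destruct (excluded_middle_informative P), (excluded_middle_informative Q),
    (excluded_middle_informative (P /\ Q)); first [ring | tauto].
Qed.

Lemma ind_true (P : Prop) : P -> Defs.ind P = 1.
Proof. intros H. unfold Defs.ind. destruct (excluded_middle_informative P); tauto. Qed.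

Lemma ind_false (P : Prop) : ~ P -> Defs.ind P = 0.
Proof. intros H. unfold Defs.ind. destruct (excluded_middle_informative P); tauto. Qed.

Lemma even_2k1 k : Z.even (Z.of_nat (2 * k + 1)) = false.
Proof. replace (Z.of_nat (2 * k + 1)) with (2 * Z.of_nat k + 1)%Z by lia. apply Z.even_odd. Qed.

Lemma even_2k2 k : Z.even (Z.of_nat (S (2 * k + 1))) = true.
Proof. apply Z.even_spec. exists (Z.of_nat (S k)). lia. Qed.

Lemma count_even_lt k :
  sum_lt (fun d => Defs.ind (Z.even (Z.of_nat d) = true)) (2 * k + 1) = INR k + 1.
Proof.
  induction k as [|k IH]; [unfold sum_lt; simpl; rewrite ind_true; auto; ring|].
  replace (2 * S k + 1)%nat with (S (S (2 * k + 1))) by lia.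
  rewrite !sum_lt_S, IH, S_INR, even_2k1, even_2k2, ind_false, ind_true by easy. ring.
Qed.

Lemma count_odd_lt k :
  sum_lt (fun d => Defs.ind (Z.even (Z.of_nat d) = false)) (2 * k + 1) = INR k.
Proof.
  induction k as [|k IH]; [unfold sum_lt; simpl; rewrite ind_false; [ring | discriminate]|].
  replace (2 * S k + 1)%nat with (S (S (2 * k + 1))) by lia.
  rewrite !sum_lt_S, IH, S_INR, even_2k1, even_2k2, ind_true, ind_false by easy. ring.
Qed.

Lemma digit_decomposition p m d r0 : (0 < p)%nat -> (r0 < p ^ m)%nat -> (d < p)%nat ->
  (Z.of_nat (p ^ m * d + r0) mod zpow p m = Z.of_nat r0 /\
   digit p (Z.of_nat (p ^ m * d + r0)) m = Z.of_nat d)%Z.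
Proof.
  intros Hp Hr Hd. unfold digit. rewrite <- Nat2Z.inj_pow.
  replace (Z.of_nat (p ^ m * d + r0)) with (Z.of_nat r0 + Z.of_nat d * Z.of_nat (p ^ m))%Z
    by lia.
  rewrite Z.mod_add, Z.div_add, Z.div_small by lia. split; apply Z.mod_small; lia.
Qed.

Lemma sum_lt_digit_split p m (P Q : Z -> Prop) : (0 < p)%nat ->
  sum_lt (fun r => Defs.ind (P (Z.of_nat r mod zpow p m)%Z /\ Q (digit p (Z.of_nat r) m)))
    (p ^ S m) =
  sum_lt (fun r0 => Defs.ind (P (Z.of_nat r0))) (p ^ m) *
  sum_lt (fun d => Defs.ind (Q (Z.of_nat d))) p.
Proof.
  intros Hp. rewrite Nat.pow_succ_r', Nat.mul_comm, sum_lt_mul, Rmult_comm, <- sum_lt_mult_r.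
  apply sum_lt_ext. intros d Hd. rewrite Rmult_comm, <- sum_lt_mult_r.
  apply sum_lt_ext. intros r0 Hr0. rewrite <- ind_and.
  destruct (digit_decomposition p m d r0 Hp Hr0 Hd) as [-> ->]. reflexivity.
Qed.

Lemma mult_even_digit_set_0 p : Defs.mult p (even_digit_set p) 0 = 0.
Proof. unfold Defs.mult. simpl. rewrite ind_false; [ring|]. intros [H _]. lia. Qed.

Section Multiplicity.
Variable k : nat.
Local Notation p := (2 * k + 1)%nat.
Let p_pos : (0 < p)%nat. Proof. lia. Qed.

Lemma count_even_digits m :
  sum_lt (fun r => Defs.ind (even_digits p (Z.of_nat r) m)) (p ^ m) = (INR k + 1) ^ m.
Proof.
  induction m as [|m IH]; [unfold sum_lt; simpl; rewrite ind_true; [ring | intros j Hj; lia]|].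
  replace ((INR k + 1) ^ S m) with ((INR k + 1) ^ m * (INR k + 1)) by (simpl; ring).
  rewrite <- IH, <- count_even_lt,
    <- (sum_lt_digit_split p m (fun r => even_digits p r m) (fun d => Z.even d = true) p_pos).
  apply sum_lt_ext. intros r _. apply ind_iff.
  now rewrite even_digits_S, even_digits_mod.
Qed.

Lemma mult_even_digit_set_S m : Defs.mult p (even_digit_set p) (S m) = INR k * (INR k + 1) ^ m.
Proof.
  rewrite <- count_even_digits, <- count_odd_lt, Rmult_comm,
    <- (sum_lt_digit_split p m (fun r => even_digits p r m) (fun d => Z.even d = false) p_pos).
  apply sum_lt_ext. intros r Hr. apply ind_iff. rewrite maximal_ball_iff by exact p_pos.
  rewrite <- Nat2Z.inj_pow, <- Nat2Z.inj_lt in *. intuition lia.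
Qed.
End Multiplicity.

(** * The complex exponential *)

Definition cexp (z : C) : C := (exp (Re z) * cos (Im z), exp (Re z) * sin (Im z)).

Lemma cexp_add z w : cexp (z + w) = (cexp z * cexp w)%C.
Proof.
  unfold cexp, Cmult. rewrite re_plus, im_plus, exp_plus, cos_plus, sin_plus.
  apply injective_projections; simpl; ring.
Qed.

Lemma cexp_0 : cexp 0 = 1%C.
Proof.
  unfold cexp. simpl. rewrite exp_0, cos_0, sin_0. apply injective_projections; simpl; ring.
Qed.

Lemma cexp_RtoC x : cexp (RtoC x) = RtoC (exp x).
Proof.
  unfold cexp, RtoC. simpl. rewrite cos_0, sin_0. apply injective_projections; simpl; ring.
Qed.

Lemma cpow_cexp l s : cpow l s = cexp (RtoC (ln l) * s).
Proof.
  unfold cpow, cexp, Cmult, RtoC, Re, Im. simpl.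
  replace (ln l * fst s - 0 * snd s) with (fst s * ln l) by ring.
  replace (ln l * snd s + 0 * fst s) with (snd s * ln l) by ring. reflexivity.
Qed.

Lemma Cmod_cexp z : Cmod (cexp z) = exp (Re z).
Proof.
  unfold Cmod, cexp. simpl.
  replace (exp (Re z) * cos (Im z) * (exp (Re z) * cos (Im z) * 1) +
           exp (Re z) * sin (Im z) * (exp (Re z) * sin (Im z) * 1))
    with (exp (Re z) * exp (Re z) * (sin (Im z) ^ 2 + cos (Im z) ^ 2)) by ring.
  rewrite <- !Rsqr_pow2, sin2_cos2, Rmult_1_r. apply sqrt_square, Rlt_le, exp_pos.
Qed.

Lemma cexp_neq_0 z : cexp z <> 0%C.
Proof.
  intros H. assert (H0 := Cmod_cexp z). rewrite H, Cmod_0 in H0.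
  pose proof (exp_pos (Re z)). lra.
Qed.

Lemma cexp_nat_mul n z : cexp (INR n * z) = (cexp z ^ n)%C.
Proof.
  induction n as [|n IH].
  - rewrite Cmult_0_l. apply cexp_0.
  - rewrite S_INR, RtoC_plus, Cmult_plus_distr_r, Cmult_1_l, cexp_add, IH, Cpow_S.
    apply Cmult_comm.
Qed.

Lemma cexp_2PI_mul n : cexp (0, 2 * PI * IZR n) = 1%C.
Proof.
  unfold cexp. simpl. replace (2 * PI * IZR n) with (2 * (IZR n * PI)) by ring.
  rewrite exp_0, cos_2a_sin, sin_2a, sin_eq_0_1 by now exists n.
  apply injective_projections; simpl; ring.
Qed.

Lemma cexp_eq_1 z : cexp z = 1%C -> exists n : Z, z = (0, 2 * PI * IZR n).
Proof.
  intros H.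
  assert (Hre : Re z = 0).
  { apply exp_inv. rewrite exp_0, <- Cmod_cexp, H. apply Cmod_1. }
  assert (Hcos : cos (Im z) = 1)
    by (apply (f_equal fst) in H; simpl in H; rewrite Hre, exp_0 in H; lra).
  assert (Hhalf : sin (Im z / 2) = 0).
  { assert (H2 := cos_2a_sin (Im z / 2)). replace (2 * (Im z / 2)) with (Im z) in H2 by field.
    assert (sin (Im z / 2) * sin (Im z / 2) = 0) by lra. nra. }
  destruct (sin_eq_0_0 _ Hhalf) as [n Hn]. exists n.
  rewrite (surjective_pairing z). f_equal; [exact Hre|].
  replace (snd z) with (2 * (Im z / 2)) by (unfold Im; field). rewrite Hn. ring.
Qed.

Lemma Cmod_le_Rabs_add z : Cmod z <= Rabs (Re z) + Rabs (Im z).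
Proof.
  unfold Cmod. rewrite <- (sqrt_pow2 (Rabs (Re z) + Rabs (Im z))) by
    (pose proof (Rabs_pos (Re z)); pose proof (Rabs_pos (Im z)); lra).
  apply sqrt_le_1_alt. rewrite <- (pow2_abs (fst z)), <- (pow2_abs (snd z)).
  pose proof (Rabs_pos (Re z)); pose proof (Rabs_pos (Im z)). unfold Re, Im in *. nra.
Qed.

Lemma Rabs_Re_Im_le_Cmod z : Rabs (Re z) <= Cmod z /\ Rabs (Im z) <= Cmod z.
Proof. pose proof (Rmax_Cmod z). split; eapply Rle_trans; eauto; [apply Rmax_l | apply Rmax_r]. Qed.

Lemma Cmod_sub_le (a b : C) : Cmod a - Cmod (b - a)%C <= Cmod b.
Proof.
  replace a with (b + (- (b - a)))%C at 1 by ring.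
  pose proof (Cmod_triangle b (- (b - a))%C) as H. rewrite Cmod_opp in H. lra.
Qed.

Lemma locally_Cmod_lt (z : C) eps : 0 < eps -> locally z (fun v => Cmod (v - z)%C < eps).
Proof.
  intros He. exists (mkposreal (eps / 2) ltac:(lra)). intros v Hv.
  apply (C_NormedModule_mixin_compat2 z v) in Hv. change (Cmod (v - z) < sqrt 2 * (eps / 2)) in Hv.
  assert (H2 := sqrt_sqrt 2 ltac:(lra)). pose proof (sqrt_pos 2). nra.
Qed.

Lemma derivable_pt_lim_little_o f x l : derivable_pt_lim f x l -> forall eps, 0 < eps ->
  exists d, 0 < d /\ forall h, Rabs h < d -> Rabs (f (x + h) - f x - l * h) <= eps * Rabs h.
Proof.
  intros Hd eps He. destruct (Hd eps He) as [d Hd']. exists d. split; [apply cond_pos|].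
  intros h Hh. destruct (Req_dec h 0) as [->|Hn].
  - rewrite Rplus_0_r, Rminus_diag, Rmult_0_r, Rminus_0_r, Rabs_R0. lra.
  - specialize (Hd' h Hn Hh).
    replace (f (x + h) - f x - l * h) with (((f (x + h) - f x) / h - l) * h) by (field; auto).
    rewrite Rabs_mult. apply Rmult_le_compat_r; [apply Rabs_pos | lra].
Qed.

Lemma exp_cos_sin_little_o e : 0 < e -> exists d, 0 < d /\ forall h, Rabs h < d ->
  Rabs (exp h - 1 - h) <= e * Rabs h /\ Rabs (cos h - 1) <= e * Rabs h /\
  Rabs (sin h - h) <= e * Rabs h.
Proof.
  intros He.
  assert (Dexp : derivable_pt_lim exp 0 1) by (rewrite <- exp_0; apply derivable_pt_lim_exp).
  assert (Dcos : derivable_pt_lim cos 0 0)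
    by (replace 0 with (- sin 0) at 2 by (rewrite sin_0; ring); apply derivable_pt_lim_cos).
  assert (Dsin : derivable_pt_lim sin 0 1) by (rewrite <- cos_0; apply derivable_pt_lim_sin).
  destruct (derivable_pt_lim_little_o _ _ _ Dexp e He) as [de [Hde Be]].
  destruct (derivable_pt_lim_little_o _ _ _ Dcos e He) as [dc [Hdc Bc]].
  destruct (derivable_pt_lim_little_o _ _ _ Dsin e He) as [ds [Hds Bs]].
  exists (Rmin de (Rmin dc ds)). split; [repeat apply Rmin_glb_lt; lra|]. intros h Hh.
  pose proof (Rmin_l de (Rmin dc ds)). pose proof (Rmin_r de (Rmin dc ds)).
  pose proof (Rmin_l dc ds). pose proof (Rmin_r dc ds).
  specialize (Be h ltac:(lra)). specialize (Bc h ltac:(lra)). specialize (Bs h ltac:(lra)).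
  rewrite Rplus_0_l, exp_0, Rmult_1_l in Be. rewrite Rplus_0_l, cos_0, Rmult_0_l, Rminus_0_r in Bc.
  rewrite Rplus_0_l, sin_0, Rmult_1_l, Rminus_0_r in Bs. auto.
Qed.

(* exp (x + i y) - 1 - (x + i y)
     = (e^x - 1 - x) + e^x (cos y - 1) + i ((e^x - 1) sin y + (sin y - y)),
   and each summand is o(|x| + |y|). *)
Lemma cexp_sub_1_little_o eps : 0 < eps -> exists d, 0 < d /\ forall u, Cmod u < d ->
  Cmod (cexp u - 1 - u) <= eps * Cmod u.
Proof.
  intros He. set (e1 := Rmin 1 (eps / 9)).
  assert (He1 : 0 < e1 <= 1) by (unfold e1; split; [apply Rmin_glb_lt; lra | apply Rmin_l]).
  assert (He1' : 9 * e1 <= eps) by (unfold e1; pose proof (Rmin_r 1 (eps / 9)); lra).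
  clearbody e1. destruct (exp_cos_sin_little_o e1 ltac:(lra)) as [d [Hd Hsmall]].
  exists (Rmin e1 d). split; [apply Rmin_glb_lt; lra|].
  intros u Hu. destruct (Rabs_Re_Im_le_Cmod u) as [Hx Hy].
  pose proof (Rmin_l e1 d). pose proof (Rmin_r e1 d).
  set (x := Re u) in *. set (y := Im u) in *.
  destruct (Hsmall x ltac:(lra)) as [Be _]. destruct (Hsmall y ltac:(lra)) as [_ [Bc Bs]].
  assert (Hex : 0 < exp x <= 3).
  { split; [apply exp_pos|]. eapply Rle_trans; [|apply exp_le_3].
    apply Rlt_le, exp_increasing. pose proof (Rle_abs x). lra. }
  assert (Hsy : Rabs (sin y) <= 2 * Rabs y).
  { replace (sin y) with ((sin y - y) + y) by ring.
    eapply Rle_trans; [apply Rabs_triang|]. pose proof (Rabs_pos y). nra. }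
  assert (Hre : Rabs (exp x * cos y - 1 - x) <= e1 * Rabs x + 3 * (e1 * Rabs y)).
  { replace (exp x * cos y - 1 - x) with ((exp x - 1 - x) + exp x * (cos y - 1)) by ring.
    eapply Rle_trans; [apply Rabs_triang|]. apply Rplus_le_compat; [exact Be|].
    rewrite Rabs_mult, (Rabs_pos_eq (exp x)) by lra.
    apply Rmult_le_compat; try lra; apply Rabs_pos. }
  assert (Him : Rabs (exp x * sin y - y) <= 2 * Rabs x * (2 * Rabs y) + e1 * Rabs y).
  { replace (exp x * sin y - y) with (((exp x - 1 - x) + x) * sin y + (sin y - y)) by ring.
    eapply Rle_trans; [apply Rabs_triang|]. apply Rplus_le_compat; [|exact Bs].
    rewrite Rabs_mult. apply Rmult_le_compat; try apply Rabs_pos; [|exact Hsy].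
    eapply Rle_trans; [apply Rabs_triang|]. pose proof (Rabs_pos x). nra. }
  eapply Rle_trans; [apply Cmod_le_Rabs_add|].
  change (Rabs (exp x * cos y - 1 - x) + Rabs (exp x * sin y - 0 - y) <= eps * Cmod u).
  rewrite Rminus_0_r. pose proof (Rabs_pos x). pose proof (Rabs_pos y). nra.
Qed.

Lemma cexp_near_0 : exists d, 0 < d /\ forall u, Cmod u < d ->
  Cmod (cexp u - 1)%C <= 2 * Cmod u /\ / 2 <= Cmod (cexp u).
Proof.
  destruct (cexp_sub_1_little_o 1 Rlt_0_1) as [d [Hd Hsmall]].
  exists (Rmin d (/ 4)). split; [apply Rmin_glb_lt; lra|]. intros u Hu.
  pose proof (Rmin_l d (/ 4)). pose proof (Rmin_r d (/ 4)).
  assert (H1 : Cmod (cexp u - 1)%C <= 2 * Cmod u).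
  { replace (cexp u - 1)%C with ((cexp u - 1 - u) + u)%C by ring.
    eapply Rle_trans; [apply Cmod_triangle|]. specialize (Hsmall u ltac:(lra)). lra. }
  split; [exact H1|]. pose proof (Cmod_sub_le 1 (cexp u)). rewrite Cmod_1 in *. lra.
Qed.

(* Derivatives of [C -> C] functions with [C] normed as an absolute-value ring, the
   setting of Coquelicot's generic rules; [C_NormedModule] carries the product topology. *)
Local Notation is_derive_C := (@is_derive C_AbsRing (AbsRing_NormedModule C_AbsRing)).

Lemma is_derive_cexp (z : C) : is_derive_C cexp z (cexp z).
Proof.
  split; [apply is_linear_scal_l|]. intros x Hx.
  apply (@is_filter_lim_locally_unique C_AbsRing (AbsRing_NormedModule C_AbsRing)) in Hx.
  subst x. intros eps.
  assert (HM : 0 < Cmod (cexp z)) by (apply Cmod_gt_0, cexp_neq_0).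
  destruct (cexp_sub_1_little_o (eps / Cmod (cexp z)) ltac:(apply Rdiv_lt_0_compat;
    [apply cond_pos | exact HM])) as [d [Hd Hsmall]].
  exists (mkposreal d Hd). intros y Hy. change C in y. change (Cmod (y - z)%C < d) in Hy.
  change (Cmod ((cexp y - cexp z) - (y - z) * cexp z)%C <= eps * Cmod (y - z)%C).
  assert (Ey : cexp y = (cexp z * cexp (y - z))%C) by (rewrite <- cexp_add; f_equal; ring).
  replace ((cexp y - cexp z) - (y - z) * cexp z)%C
    with (cexp z * (cexp (y - z) - 1 - (y - z)))%C by (rewrite Ey; ring).
  rewrite Cmod_mult. specialize (Hsmall _ Hy).
  apply Rmult_le_compat_l with (r := Cmod (cexp z)) in Hsmall; [|lra].
  replace (eps * Cmod (y - z)%C) with (Cmod (cexp z) * (eps / Cmod (cexp z) * Cmod (y - z)%C))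
    by (field; lra). exact Hsmall.
Qed.

Lemma is_derive_Cinv (z : C) : z <> 0%C -> is_derive_C Cinv z (- / (z * z))%C.
Proof.
  intros Hz. split; [apply is_linear_scal_l|]. intros x Hx.
  apply (@is_filter_lim_locally_unique C_AbsRing (AbsRing_NormedModule C_AbsRing)) in Hx.
  subst x. intros eps. assert (Hm : 0 < Cmod z) by now apply Cmod_gt_0.
  set (d := Rmin (Cmod z / 2) (eps * Cmod z ^ 3 / 2)).
  assert (Hd : 0 < d).
  { apply Rmin_glb_lt; [lra|]. apply Rdiv_lt_0_compat; [|lra].
    apply Rmult_lt_0_compat; [apply cond_pos | now apply pow_lt]. }
  exists (mkposreal d Hd). intros y Hy. change C in y. change (Cmod (y - z)%C < d) in Hy.
  change (Cmod ((/ y - / z) - (y - z) * (- / (z * z)))%C <= eps * Cmod (y - z)%C).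
  assert (Hd1 : d <= Cmod z / 2) by apply Rmin_l.
  assert (Hd2 : d <= eps * Cmod z ^ 3 / 2) by apply Rmin_r.
  assert (Hy0 : Cmod z / 2 < Cmod y) by (pose proof (Cmod_sub_le z y); lra).
  assert (Hyn : y <> 0%C) by (intros ->; rewrite Cmod_0 in Hy0; lra).
  replace ((/ y - / z) - (y - z) * (- / (z * z)))%C with ((y - z) * (y - z) / (z * z * y))%C
    by (field; auto).
  rewrite Cmod_div, !Cmod_mult by (repeat apply Cmult_neq_0; auto).
  set (e := Cmod (y - z)%C) in *. assert (0 <= e) by apply Cmod_ge_0.
  set (m := Cmod z) in *. set (c := Cmod y) in *. pose proof (cond_pos eps).
  assert (Hmc : 0 < m * m * c) by (apply Rmult_lt_0_compat; nra).
  apply Rmult_le_reg_r with (r := m * m * c); [exact Hmc|].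
  unfold Rdiv. rewrite Rmult_assoc, Rinv_l, Rmult_1_r by (apply Rgt_not_eq, Hmc).
  simpl pow in Hd2.
  assert (e * e <= e * (eps * (m * (m * (m * 1))) / 2)) by (apply Rmult_le_compat_l; lra).
  assert (eps * e * (m * m * (m / 2)) <= eps * e * (m * m * c))
    by (apply Rmult_le_compat_l; [nra|]; apply Rmult_le_compat_l; nra).
  nra.
Qed.

Lemma is_derive_C_NormedModule (f : C -> C) z l :
  is_derive_C f z l -> @is_derive C_AbsRing C_NormedModule f z l.
Proof.
  intros [[Hadd Hscal [M [HM Hbound]]] Hdom]. split; [split; auto; now exists M|].
  intros x Hx eps. exact (Hdom x Hx eps).
Qed.

Local Notation ex_derive_C := (@ex_derive C_AbsRing (AbsRing_NormedModule C_AbsRing)).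

Lemma ex_derive_Cmult (f g : C -> C) z :
  ex_derive_C f z -> ex_derive_C g z -> ex_derive_C (fun s => f s * g s)%C z.
Proof.
  intros [df Hf] [dg Hg]. eexists. exact (is_derive_mult f g z df dg Hf Hg Cmult_comm).
Qed.

Lemma ex_derive_cexp_mul (c z : C) : ex_derive_C (fun s => cexp (c * s))%C z.
Proof.
  apply (@ex_derive_comp C_AbsRing (AbsRing_NormedModule C_AbsRing) cexp (fun s => c * s)%C).
  - eexists. apply is_derive_cexp.
  - apply ex_derive_Cmult; [apply ex_derive_const | apply ex_derive_id].
Qed.

Lemma sum_n_Cpow (z : C) N : ((1 - z) * sum_n (fun n => z ^ n) N = 1 - z ^ S N)%C.
Proof.
  induction N as [|N IH].
  - rewrite sum_O. simpl. ring.
  - rewrite sum_Sn. change (plus ?a ?b) with (Cplus a b).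
    rewrite Cmult_plus_distr_l, IH. simpl. ring.
Qed.

Lemma is_series_Cpow (z : C) : Cmod z < 1 -> is_series (fun n => z ^ n)%C (/ (1 - z))%C.
Proof.
  intros Hz.
  assert (Hz1 : (1 - z)%C <> 0%C).
  { intros H. apply (proj2 (Ceq_minus 1 z)) in H. rewrite <- H, Cmod_1 in Hz. lra. }
  assert (Hm : 0 < Cmod (1 - z)%C) by now apply Cmod_gt_0.
  apply filterlim_locally. intros eps.
  destruct (pow_lt_1_zero (Cmod z) ltac:(rewrite Rabs_pos_eq; auto; apply Cmod_ge_0)
              (eps * Cmod (1 - z)%C)) as [N HN].
  { apply Rmult_lt_0_compat; [apply cond_pos | exact Hm]. }
  exists N. intros n Hn. apply C_NormedModule_mixin_compat1.
  change (Cmod (sum_n (fun n => z ^ n) n - / (1 - z))%C < eps).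
  replace (sum_n (fun n => z ^ n)%C n) with ((1 - z ^ S n) / (1 - z))%C
    by (rewrite <- sum_n_Cpow; field; exact Hz1).
  replace ((1 - z ^ S n) / (1 - z) - / (1 - z))%C with (- z ^ S n / (1 - z))%C
    by (field; exact Hz1).
  rewrite Cmod_div, Cmod_opp, Cmod_pow by exact Hz1.
  specialize (HN (S n) ltac:(lia)). rewrite Rabs_pos_eq in HN by (apply pow_le, Cmod_ge_0).
  apply Rmult_lt_reg_r with (Cmod (1 - z)%C); [exact Hm|].
  unfold Rdiv. rewrite Rmult_assoc, Rinv_l, Rmult_1_r by lra. exact HN.
Qed.

(** * Fractal strings with geometric multiplicities *)

Lemma Rpower_pow_l x n s : 0 < x -> Rpower (x ^ n) s = Rpower x s ^ n.
Proof.
  intros Hx. rewrite <- Rpower_pow, <- (Rpower_pow n (Rpower x s)), !Rpower_mult, Rmult_comm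
    by (auto; apply exp_pos). reflexivity.
Qed.

Section GeometricString.
Variables (p : nat) (K : pset) (a b : R).
Hypotheses (p_gt_1 : 1 < INR p) (a_pos : 0 < a) (b_pos : 0 < b).
Hypothesis mult_0 : Defs.mult p K 0 = 0.
Hypothesis mult_S : forall m, Defs.mult p K (S m) = a * b ^ m.

Lemma ln_p_pos : 0 < ln (INR p).
Proof. rewrite <- ln_1. apply ln_increasing; lra. Qed.

Lemma ratio_lt_1_iff s : b * Rpower (/ INR p) s < 1 <-> ln b / ln (INR p) < s.
Proof.
  assert (HL := ln_p_pos).
  unfold Rpower. rewrite ln_Rinv, <- (exp_ln b) at 1 by lra. rewrite <- exp_plus, <- exp_0.
  split; intros H.
  - apply exp_lt_inv in H. apply Rmult_lt_reg_r with (ln (INR p)); auto.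
    unfold Rdiv. rewrite Rmult_assoc, Rinv_l by lra. lra.
  - apply exp_increasing. apply Rmult_lt_compat_r with (r := ln (INR p)) in H; auto.
    unfold Rdiv in H. rewrite Rmult_assoc, Rinv_l in H by lra. lra.
Qed.

Lemma geometric_term s n : Defs.mult p K (S n) * Rpower (/ INR p ^ S n) s =
  a * Rpower (/ INR p) s * (b * Rpower (/ INR p) s) ^ n.
Proof.
  rewrite mult_S, <- pow_inv, Rpower_pow_l, Rpow_mult_distr by (apply Rinv_0_lt_compat; lra).
  simpl pow. ring.
Qed.

Lemma conv_at_iff s : conv_at p K s <-> ln b / ln (INR p) < s.
Proof.
  rewrite <- ratio_lt_1_iff. unfold conv_at. rewrite ex_series_incr_1.
  assert (Hc : 0 < a * Rpower (/ INR p) s) by (apply Rmult_lt_0_compat; auto; apply exp_pos).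
  assert (Hr : 0 < b * Rpower (/ INR p) s) by (apply Rmult_lt_0_compat; auto; apply exp_pos).
  split.
  - intros Hconv. apply Rnot_le_lt. intros Hge.
    apply ex_series_lim_0 in Hconv.
    assert (Hle : forall n, a * Rpower (/ INR p) s <=
                    Defs.mult p K (S n) * Rpower (/ INR p ^ S n) s).
    { intros n. rewrite geometric_term. rewrite <- (Rmult_1_r (a * _)) at 1.
      apply Rmult_le_compat_l; [lra|]. now apply pow_R1_Rle. }
    assert (H := is_lim_seq_le _ _ _ _ Hle (is_lim_seq_const _) Hconv). simpl in H. lra.
  - intros Hlt. apply (ex_series_ext (fun n => scal (a * Rpower (/ INR p) s)
                                         ((b * Rpower (/ INR p) s) ^ n))).
    + intros n. now rewrite geometric_term.
    + apply (@ex_series_scal_l R_AbsRing R_NormedModule), ex_series_geom.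
      rewrite Rabs_pos_eq; lra.
Qed.

Lemma geometric_abscissa : is_abscissa p K (ln b / ln (INR p)).
Proof.
  split.
  - intros s Hs. apply Rlt_le, conv_at_iff, Hs.
  - intros d Hd. apply Rnot_lt_le. intros Hlt.
    assert (H := Hd ((ln b / ln (INR p) + d) / 2) ltac:(apply conv_at_iff; lra)). lra.
Qed.

Definition geometric_zeta (p : nat) (a b : R) (s : C) : C :=
  (RtoC a * cexp (RtoC (- ln (INR p)) * s) / (1 - RtoC b * cexp (RtoC (- ln (INR p)) * s)))%C.

Local Notation p_pow_neg s := (cexp (RtoC (- ln (INR p)) * s)).

Lemma Cmod_p_pow_neg s : Cmod (p_pow_neg s) = Rpower (/ INR p) (Re s).
Proof.
  rewrite Cmod_cexp. unfold Rpower. rewrite ln_Rinv by lra. f_equal.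
  rewrite re_mult, re_RtoC, im_RtoC. ring.
Qed.

Lemma zeta_term_0 s : zeta_term p K s 0 = 0%C.
Proof. unfold zeta_term. rewrite mult_0. apply Cmult_0_l. Qed.

Lemma zeta_term_S s n :
  zeta_term p K s (S n) = (RtoC a * p_pow_neg s * (RtoC b * p_pow_neg s) ^ n)%C.
Proof.
  unfold zeta_term. rewrite mult_S, cpow_cexp, <- pow_inv, ln_pow, ln_Rinv by
    (try apply Rinv_0_lt_compat; lra).
  replace (RtoC (INR (S n) * - ln (INR p)) * s)%C with (INR (S n) * (RtoC (- ln (INR p)) * s))%C
    by (rewrite RtoC_mult; ring).
  rewrite cexp_nat_mul, RtoC_mult, RtoC_pow, Cpow_mult_l. simpl. ring.
Qed.

Lemma geometric_zeta_series s : ln b / ln (INR p) < Re s ->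
  is_series (zeta_term p K s) (geometric_zeta p a b s).
Proof.
  intros Hs. apply is_series_decr_1.
  assert (Hw : Cmod (RtoC b * p_pow_neg s)%C < 1).
  { rewrite Cmod_mult, Cmod_R, Rabs_pos_eq, Cmod_p_pow_neg by lra. now apply ratio_lt_1_iff. }
  change (plus ?x (opp ?y)) with (Cplus x (Copp y)).
  replace (geometric_zeta p a b s + - zeta_term p K s 0)%C
    with (RtoC a * p_pow_neg s * / (1 - RtoC b * p_pow_neg s))%C
    by (rewrite zeta_term_0; unfold geometric_zeta, Cdiv; ring).
  apply (is_series_ext
           (fun n => scal (RtoC a * p_pow_neg s) ((RtoC b * p_pow_neg s) ^ n))%C).
  - intros n. now rewrite zeta_term_S.
  - exact (is_series_scal_l _ _ _ (is_series_Cpow _ Hw)).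
Qed.

Lemma scaled_p_pow_neg_cexp s :
  (RtoC b * p_pow_neg s)%C = cexp (RtoC (ln b) + RtoC (- ln (INR p)) * s)%C.
Proof. now rewrite cexp_add, cexp_RtoC, exp_ln. Qed.

Lemma denominator_eq_0_iff s : (1 - RtoC b * p_pow_neg s)%C = 0%C <->
  exists n : Z, s = (ln b / ln (INR p), 2 * PI * IZR n / ln (INR p)).
Proof.
  assert (HL := ln_p_pos). rewrite <- Ceq_minus, scaled_p_pow_neg_cexp.
  set (w := (RtoC (ln b) + RtoC (- ln (INR p)) * s)%C).
  assert (Hw : w = (ln b - ln (INR p) * Re s, - ln (INR p) * Im s)).
  { unfold w, Cplus, Cmult, RtoC, Re, Im. simpl. f_equal; ring. }
  split.
  - intros H. symmetry in H. destruct (cexp_eq_1 w H) as [n Hn]. rewrite Hw in Hn.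
    injection Hn as Hre Him. exists (- n)%Z. rewrite (surjective_pairing s), opp_IZR.
    f_equal; [unfold Re in Hre | unfold Im in Him]; field_simplify_eq; lra.
  - intros [n ->]. symmetry. replace w with (0, 2 * PI * IZR (- n)); [apply cexp_2PI_mul|].
    rewrite Hw, opp_IZR. unfold Re, Im. simpl. f_equal; field; lra.
Qed.

Lemma ex_derive_geometric_zeta z : (1 - RtoC b * p_pow_neg z)%C <> 0%C ->
  exists l, is_derive (geometric_zeta p a b) z l.
Proof.
  intros Hz.
  assert (HE := ex_derive_cexp_mul (RtoC (- ln (INR p))) z).
  assert (Hden : ex_derive_C (fun s => 1 - RtoC b * p_pow_neg s)%C z).
  { apply (@ex_derive_minus C_AbsRing (AbsRing_NormedModule C_AbsRing) (fun _ => RtoC 1));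
      [apply ex_derive_const|].
    apply ex_derive_Cmult; [apply ex_derive_const | exact HE]. }
  assert (Hinv : ex_derive_C (fun s => / (1 - RtoC b * p_pow_neg s))%C z).
  { apply (@ex_derive_comp C_AbsRing (AbsRing_NormedModule C_AbsRing) Cinv);
      [eexists; now apply is_derive_Cinv | exact Hden]. }
  destruct (ex_derive_Cmult (fun s => RtoC a * p_pow_neg s)%C _ z
              (ex_derive_Cmult _ _ z (ex_derive_const _ _) HE) Hinv) as [l Hl].
  exists l. now apply is_derive_C_NormedModule.
Qed.

Lemma poles_separated n m : Rabs (2 * PI * IZR n / ln (INR p) - 2 * PI * IZR m / ln (INR p))
  < 2 * PI / ln (INR p) -> n = m.
Proof.
  intros H. assert (HL := ln_p_pos). assert (HPI := PI_RGT_0).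
  replace (2 * PI * IZR n / ln (INR p) - 2 * PI * IZR m / ln (INR p))
    with (2 * PI / ln (INR p) * IZR (n - m)) in H by (rewrite minus_IZR; field; lra).
  rewrite Rabs_mult, Rabs_pos_eq, <- abs_IZR in H by (apply Rlt_le, Rdiv_lt_0_compat; lra).
  assert (Habs : IZR (Z.abs (n - m)) < 1).
  { apply Rmult_lt_reg_l with (2 * PI / ln (INR p)); [apply Rdiv_lt_0_compat|]; lra. }
  apply lt_IZR in Habs. lia.
Qed.

Lemma p_pow_neg_shift z v : p_pow_neg v = (p_pow_neg z * cexp (RtoC (- ln (INR p)) * (v - z)))%C.
Proof. rewrite <- cexp_add. f_equal. ring. Qed.

Lemma denominator_neq_0_near_pole z :
  (exists n : Z, z = (ln b / ln (INR p), 2 * PI * IZR n / ln (INR p))) ->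
  locally' z (fun v => (1 - RtoC b * p_pow_neg v)%C <> 0%C).
Proof.
  intros [n Hn]. assert (HL := ln_p_pos). assert (HPI := PI_RGT_0).
  exists (mkposreal (2 * PI / ln (INR p)) ltac:(apply Rdiv_lt_0_compat; lra)).
  intros v [_ Him] Hvz Hv. apply Hvz.
  destruct (proj1 (denominator_eq_0_iff v) Hv) as [m Hm]. rewrite Hn, Hm in *.
  change (Rabs (2 * PI * IZR m / ln (INR p) - 2 * PI * IZR n / ln (INR p))
          < 2 * PI / ln (INR p)) in Him.
  now rewrite (poles_separated m n Him).
Qed.

Lemma Cmod_geometric_zeta_near_pole z v : (RtoC b * p_pow_neg z)%C = 1%C ->
  let u := (RtoC (- ln (INR p)) * (v - z))%C in (1 - cexp u)%C <> 0%C ->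
  Cmod (geometric_zeta p a b v) = a / b * Cmod (cexp u) / Cmod (1 - cexp u)%C.
Proof.
  intros Hz u Hu.
  assert (HEz : Cmod (p_pow_neg z) = / b).
  { apply (f_equal Cmod) in Hz. rewrite Cmod_mult, Cmod_R, Rabs_pos_eq, Cmod_1 in Hz by lra.
    field_simplify_eq; lra. }
  unfold geometric_zeta. rewrite (p_pow_neg_shift z v). fold u.
  replace (1 - RtoC b * (p_pow_neg z * cexp u))%C with (1 - cexp u)%C
    by (rewrite Cmult_assoc, Hz; ring).
  assert (Hm : 0 < Cmod (1 - cexp u)%C) by now apply Cmod_gt_0.
  rewrite Cmod_div, !Cmod_mult, Cmod_R, Rabs_pos_eq, HEz by (auto; lra). field. lra.
Qed.

Lemma Cmod_geometric_zeta_near_pole_ge z v d0 :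
  (forall u, Cmod u < d0 -> Cmod (cexp u - 1)%C <= 2 * Cmod u /\ / 2 <= Cmod (cexp u)) ->
  (RtoC b * p_pow_neg z)%C = 1%C -> (1 - RtoC b * p_pow_neg v)%C <> 0%C ->
  0 < Cmod (v - z)%C -> ln (INR p) * Cmod (v - z)%C < d0 ->
  a / (4 * b * ln (INR p) * Cmod (v - z)%C) <= Cmod (geometric_zeta p a b v).
Proof.
  intros Hnear Hz Hden Hvz Hd0. assert (HL := ln_p_pos).
  set (u := (RtoC (- ln (INR p)) * (v - z))%C).
  assert (Hden_u : (1 - RtoC b * p_pow_neg v)%C = (1 - cexp u)%C)
    by (rewrite (p_pow_neg_shift z v), Cmult_assoc, Hz; unfold u; ring).
  rewrite Hden_u in Hden.
  assert (Hu : Cmod u = ln (INR p) * Cmod (v - z)%C)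
    by (unfold u; rewrite Cmod_mult, Cmod_R, Rabs_left; lra).
  destruct (Hnear u ltac:(lra)) as [Hnum Hexp].
  rewrite <- Cmod_opp, Copp_minus_distr, Hu in Hnum.
  assert (Hc : 0 < Cmod (1 - cexp u)%C) by now apply Cmod_gt_0.
  rewrite (Cmod_geometric_zeta_near_pole z v Hz Hden). fold u.
  replace (a / (4 * b * ln (INR p) * Cmod (v - z)%C))
    with (a / b * / 2 * / (2 * (ln (INR p) * Cmod (v - z)%C))) by (field; lra).
  assert (Hab : 0 < a / b) by (apply Rdiv_lt_0_compat; lra).
  apply Rmult_le_compat.
  - apply Rlt_le, Rmult_lt_0_compat; lra.
  - apply Rlt_le, Rinv_0_lt_compat. nra.
  - apply Rmult_le_compat_l; lra.
  - apply Rinv_le_contravar; lra.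
Qed.

Lemma geometric_zeta_pole z :
  (exists n : Z, z = (ln b / ln (INR p), 2 * PI * IZR n / ln (INR p))) ->
  filterlim (fun w => Cmod (geometric_zeta p a b w)) (locally' z) (Rbar_locally p_infty).
Proof.
  intros Hpole. assert (HL := ln_p_pos).
  assert (Hz : (RtoC b * p_pow_neg z)%C = 1%C).
  { symmetry. apply Ceq_minus, denominator_eq_0_iff, Hpole. }
  destruct cexp_near_0 as [d0 [Hd0 Hnear]].
  intros P [M HM]. unfold filtermap.
  assert (HM1 : 0 < Rabs M + 1) by (pose proof (Rabs_pos M); lra).
  set (r := Rmin (d0 / ln (INR p)) (a / (4 * b * ln (INR p) * (Rabs M + 1)))).
  assert (Hr : 0 < r).
  { apply Rmin_glb_lt; apply Rdiv_lt_0_compat; try lra. repeat apply Rmult_lt_0_compat; lra. }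
  apply (filter_imp (fun v => (1 - RtoC b * p_pow_neg v)%C <> 0%C /\ Cmod (v - z)%C < r)).
  2: { apply filter_and; [now apply denominator_neq_0_near_pole|].
       exact (filter_imp _ _ (fun v H _ => H) (locally_Cmod_lt z r Hr)). }
  intros v [Hden Hvr]. apply HM.
  assert (Hvz : 0 < Cmod (v - z)%C).
  { apply Cmod_gt_0. intros H. apply (proj2 (Ceq_minus v z)) in H. subst v.
    apply Hden. rewrite Hz. ring. }
  assert (Hvd0 : ln (INR p) * Cmod (v - z)%C < d0).
  { assert (Cmod (v - z)%C < d0 / ln (INR p)) by (eapply Rlt_le_trans; [|apply Rmin_l]; eauto).
    apply Rmult_lt_compat_l with (r := ln (INR p)) in H; [|lra].
    replace (ln (INR p) * (d0 / ln (INR p))) with d0 in H by (field; lra). exact H. }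
  eapply Rlt_le_trans; [|exact (Cmod_geometric_zeta_near_pole_ge z v d0 Hnear Hz Hden Hvz Hvd0)].
  assert (Hvb : Cmod (v - z)%C < a / (4 * b * ln (INR p) * (Rabs M + 1)))
    by (eapply Rlt_le_trans; [|apply Rmin_r]; eauto).
  apply Rlt_le_trans with (Rabs M + 1); [pose proof (Rle_abs M); lra|].
  apply Rmult_le_reg_r with (4 * b * ln (INR p) * Cmod (v - z)%C);
    [repeat apply Rmult_lt_0_compat; lra|].
  replace (a / (4 * b * ln (INR p) * Cmod (v - z)%C) * (4 * b * ln (INR p) * Cmod (v - z)%C))
    with a by (field; repeat split; lra).
  apply Rmult_lt_compat_l with (r := 4 * b * ln (INR p) * (Rabs M + 1)) in Hvb;
    [|repeat apply Rmult_lt_0_compat; lra].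
  replace (4 * b * ln (INR p) * (Rabs M + 1) * (a / (4 * b * ln (INR p) * (Rabs M + 1))))
    with a in Hvb by (field; repeat split; lra). lra.
Qed.

Lemma geometric_zeta_meromorphic :
  meromorphic_cont_with_poles p K (geometric_zeta p a b)
    (fun z => exists n : Z, z = (ln b / ln (INR p), 2 * PI * IZR n / ln (INR p))).
Proof.
  split; [|split].
  - exists (ln b / ln (INR p)). exact geometric_zeta_series.
  - intros z Hz. apply ex_derive_geometric_zeta. intros H. apply Hz, denominator_eq_0_iff, H.
  - exact geometric_zeta_pole.
Qed.
End GeometricString.

Lemma odd_prime_2k1 p : prime (Z.of_nat p) -> (2 < p)%nat ->
  exists k, p = (2 * k + 1)%nat /\ (1 <= k)%nat.
Proof.
  intros Hpr Hp2. destruct (Nat.Even_or_Odd p) as [[m Hm]|[m Hm]].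
  - exfalso. assert (Hd : (2 | Z.of_nat p)%Z) by (exists (Z.of_nat m); lia).
    destruct (prime_divisors _ Hpr 2 Hd) as [H|[H|[H|H]]]; lia.
  - exists m. split; lia.
Qed.

Theorem theorem4p3 :
  forall p : nat, prime (Z.of_nat p) -> (2 < p)%nat ->
  let D := ln ((1 + INR p) / 2) / ln (INR p) in
  exists (m : nat) (cs : list Z) (K : pset),
    (1 <= m)%nat /\ (2 <= length cs)%nat /\ NoDup cs /\
    attractor p m cs K /\
    (forall K' : pset, attractor p m cs K' -> pset_eq p K' K) /\
    is_abscissa p K D /\
    exists f : C -> C,
      meromorphic_cont_with_poles p K f
        (fun z : C => exists n : Z, z = (D, 2 * PI * IZR n / ln (INR p))).
Proof.
  intros p Hprime Hp2 D.
  destruct (odd_prime_2k1 p Hprime Hp2) as [k [-> Hk]].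
  assert (HD : D = ln (INR k + 1) / ln (INR (2 * k + 1))).
  { unfold D. do 2 f_equal. rewrite plus_INR, mult_INR. simpl. field. }
  assert (Hp1 : 1 < INR (2 * k + 1)) by (apply lt_1_INR; lia).
  assert (Hk0 : 0 < INR k) by (apply lt_0_INR; lia).
  assert (Hmult_S := mult_even_digit_set_S k).
  exists 1%nat, (even_offsets k), (even_digit_set (2 * k + 1)).
  split; [lia|]. split; [rewrite even_offsets_length; lia|].
  split; [apply even_offsets_NoDup|]. split; [apply even_digit_set_attractor|].
  split; [exact (attractor_unique k)|]. rewrite HD.
  split; [apply geometric_abscissa with (a := INR k); auto; lra|].
  exists (geometric_zeta (2 * k + 1) (INR k) (INR k + 1)).
  apply geometric_zeta_meromorphic; auto; [lra | apply mult_even_digit_set_0].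
Qed.
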